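(* With $\alpha=(1+\sqrt5)/2$, $\beta=(1-\sqrt5)/2$, the following hold: $$\operatorname{Li}_2\Big(\frac\alpha2\Big)+\operatorname{Li}_2\Big(\frac\beta2\Big)=\frac{\pi^2}{12}+2\ln^2\alpha-\ln^2 2,$$ $$\operatorname{Li}_2\Big(\frac{\alpha^3}5\Big)+\operatorname{Li}_2\Big(\frac{\beta^3}5\Big)=\frac{\pi^2}{12}+6\ln^2\alpha-2\ln^22+2\ln2\ln5-\ln^25-\operatorname{Li}_2\Big(-\frac14\Big);$$ for every even integer $r\ge0$, $$\operatorname{Li}_2\Big(\frac{\alpha^r}{L_r}\Big)+\operatorname{Li}_2\Big(\frac{\beta^r}{L_r}\Big)=\frac{\pi^2}{6}+r^2\ln^2\alpha-\ln^2(L_r),$$ in particular $\operatorname{Li}_2(\alpha^2/3)+\operatorname{Li}_2(\beta^2/3)=\frac{\pi^2}6+4\ln^2\alpha-\ln^23$; for every odd integer $r\ge1$, $$\operatorname{Li}_2\Big(\frac{\alpha^r}{\sqrt5F_r}\Big)+\operatorname{Li}_2\Big(\frac{-\beta^r}{\sqrt5F_r}\Big)=\frac{\pi^2}{6}+r^2\ln^2\alpha-\frac14\ln^25-\ln5\ln(F_r)-\ln^2(F_r),$$ in particular $\operatorname{Li}_2(\alpha/\sqrt5)+\operatorname{Li}_2(-\beta/\sqrt5)=\frac{\pi^2}6+\ln^2\alpha-\frac14\ln^25$; and $$\operatorname{Li}_2\Big(\frac{\alpha^2}4\Big)+\operatorname{Li}_2\Big(\frac{\beta^2}4\Big)=\frac{\pi^2}{6}+2\ln^2\alpha-\frac12\ln^25+2\ln2\ln5-4\ln^22-\operatorname{Li}_2\Big(\frac15\Big),$$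 $$\operatorname{Li}_2\Big(\frac\alpha3\Big)+\operatorname{Li}_2\Big(\frac\beta3\Big)=\ln^2\alpha-\frac14\ln^25+\ln3\ln5-\ln^23+\frac32\operatorname{Li}_2\Big(\frac15\Big)-\frac12\operatorname{Li}_2\Big(\frac1{25}\Big).$$
   Context: $\operatorname{Li}_2(x)=\sum_{k\ge1}x^k/k^2$ is the dilogarithm (for real $x\le1$). $F_n=(\alpha^n-\beta^n)/(\alpha-\beta)$ and $L_n=\alpha^n+\beta^n$ are the Fibonacci and Lucas numbers. *)

From Stdlib Require Import Reals Lra.
From Coquelicot Require Import Coquelicot.
Open Scope R_scope.

Definition Li2 (x : R) : R := Series (fun k : nat => x ^ (S k) / (INR (S k)) ^ 2).

Definition alpha : R := (1 + sqrt 5) / 2.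
Definition beta : R := (1 - sqrt 5) / 2.

Definition Fib (n : nat) : R := (alpha ^ n - beta ^ n) / (alpha - beta).
Definition Luc (n : nat) : R := alpha ^ n + beta ^ n.

(* Li2 is a power series of radius 1 with derivative -ln(1-x)/x. Differentiating shows
   that the defects of Landen's identity, of the duplication formula, of Euler's reflection
   formula and of Abel's five-term relation are locally constant; evaluating at x = 0 fixes
   the constants, except for the reflection formula, whose constant is Li2(1) = pi^2/6 by
   Abel's limit theorem and a Wallis-integral proof of zeta(2) = pi^2/6.
   For r even (resp. odd) the numbers alpha^r and beta^r (resp. -beta^r) are mutually inverse
   with sum L_r (resp. sqrt5 F_r), so reflection at alpha^r / L_r gives the general identities.
   The remaining values are linear combinations of the four identities taken at points of
   Q(sqrt5) where every logarithm is that of a product of powers of alpha, 2, 3 and sqrt5. *)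

From Stdlib Require Import Reals Arith Lra Lia.
From Coquelicot Require Import Coquelicot.
Open Scope R_scope.

Definition Li2_coef : nat -> R := PS_incr_1 (fun n => / INR (S n) ^ 2).
Definition dLi2_coef (n : nat) : R := / INR (S n).
Definition dLi2 (x : R) : R := PSeries dLi2_coef x.

Lemma INR_S_neq0 n : INR (S n) <> 0.
Proof. apply not_0_INR; lia. Qed.

Lemma Li2_PSeries x : Li2 x = PSeries Li2_coef x.
Proof.
  unfold Li2, Li2_coef. rewrite PSeries_incr_1. unfold PSeries.
  rewrite <- Series_scal_l. apply Series_ext. intro n.
  change (scal ?a ?b) with (a * b). simpl. field. apply INR_S_neq0.
Qed.

Lemma is_lim_seq_inv_S : is_lim_seq (fun n => / INR (S n)) 0.
Proof.
  apply (is_lim_seq_incr_1 (fun n => / INR n)).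
  replace (Finite 0) with (Rbar_inv p_infty) by reflexivity.
  apply is_lim_seq_inv; [exact is_lim_seq_INR | discriminate].
Qed.

Lemma CV_radius_dLi2_coef : CV_radius dLi2_coef = 1.
Proof.
  rewrite <- Rinv_1 at 1.
  apply CV_radius_finite_DAlembert; [intro n; apply Rinv_neq_0_compat, INR_S_neq0 | lra |].
  apply (is_lim_seq_ext (fun n => 1 - / INR (S (S n)))).
  - intro n. unfold dLi2_coef.
    pose proof (pos_INR n). rewrite !S_INR.
    rewrite Rabs_pos_eq; [field; lra|].
    apply Rlt_le, Rdiv_lt_0_compat; apply Rinv_0_lt_compat; lra.
  - replace (Finite 1) with (Finite (1 - 0)) by (f_equal; ring).
    apply is_lim_seq_minus'; [apply is_lim_seq_const|].
    exact (proj1 (is_lim_seq_incr_1 _ _) is_lim_seq_inv_S).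
Qed.

Lemma PS_derive_Li2_coef n : PS_derive Li2_coef n = dLi2_coef n.
Proof.
  unfold PS_derive, Li2_coef, PS_incr_1, dLi2_coef.
  field. apply INR_S_neq0.
Qed.

Lemma CV_radius_Li2_coef : CV_radius Li2_coef = 1.
Proof.
  rewrite <- CV_radius_dLi2_coef, <- CV_radius_derive.
  apply CV_radius_ext, PS_derive_Li2_coef.
Qed.

Lemma Rabs_lt_1 x : -1 < x < 1 -> Rbar_lt (Rabs x) 1.
Proof. intro H. apply Rabs_def1; lra. Qed.

Lemma is_derive_Li2 x : -1 < x < 1 -> is_derive Li2 x (dLi2 x).
Proof.
  intro H. apply (is_derive_ext (PSeries Li2_coef)); [intro t; now rewrite Li2_PSeries|].
  unfold dLi2. rewrite <- (PSeries_ext _ _ _ PS_derive_Li2_coef).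
  apply is_derive_PSeries. rewrite CV_radius_Li2_coef. now apply Rabs_lt_1.
Qed.

Lemma ex_derive_Li2 x : -1 < x < 1 -> ex_derive Li2 x.
Proof. intro H. eexists. now apply is_derive_Li2. Qed.

Lemma Derive_Li2 x : -1 < x < 1 -> Derive Li2 x = dLi2 x.
Proof. intro H. now apply is_derive_unique, is_derive_Li2. Qed.

Lemma Li2_0 : Li2 0 = 0.
Proof. now rewrite Li2_PSeries, PSeries_0. Qed.

Lemma dLi2_0 : dLi2 0 = 1.
Proof. unfold dLi2, dLi2_coef. rewrite PSeries_0. simpl. field. Qed.

Lemma continuous_of_ex_derive (f : R -> R) x : ex_derive f x -> continuous f x.
Proof. apply (ex_derive_continuous (K := R_AbsRing) (V := R_NormedModule)). Qed.

Lemma is_derive_0_eq (f : R -> R) a b :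
  (forall x, a < x < b -> is_derive f x 0) ->
  forall x y, a < x < b -> a < y < b -> f x = f y.
Proof.
  intros Hd x y Hx Hy.
  assert (Hin : forall t, Rmin x y <= t <= Rmax x y -> a < t < b).
  { intros t Ht. split.
    - apply Rlt_le_trans with (Rmin x y); [apply Rmin_glb_lt|]; lra.
    - apply Rle_lt_trans with (Rmax x y); [|apply Rmax_lub_lt]; lra. }
  destruct (MVT_gen f x y (fun _ => 0)) as [c [_ Hc]].
  - intros t Ht. apply Hd, Hin. lra.
  - intros t Ht. apply continuity_pt_filterlim, continuous_of_ex_derive.
    eexists. now apply Hd, Hin.
  - lra.
Qed.

Lemma PSeries_geom x : -1 < x < 1 -> PSeries (fun _ => 1) x = / (1 - x).
Proof.
  intro H. apply is_pseries_unique.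
  apply (is_series_ext (fun n => x ^ n)).
  - intro n. rewrite <- pow_n_pow. change (x ^ n = x ^ n * 1). ring.
  - apply is_series_geom, Rabs_def1; lra.
Qed.

Lemma mul_dLi2 x : -1 < x < 1 -> x * dLi2 x = - ln (1 - x).
Proof.
  intro Hx.
  set (K := fun t => PSeries (PS_incr_1 dLi2_coef) t + ln (1 - t)).
  assert (HK : forall t, -1 < t < 1 -> is_derive K t 0).
  { intros t Ht. unfold K.
    replace 0 with (/ (1 - t) + (-1) / (1 - t)) by (field; lra).
    apply (is_derive_plus (PSeries (PS_incr_1 dLi2_coef)) (fun t => ln (1 - t)));
      [|auto_derive; [lra | field; lra]].
    rewrite <- (PSeries_geom t Ht), <- (PSeries_ext (PS_derive (PS_incr_1 dLi2_coef))).
    - apply is_derive_PSeries.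
      rewrite CV_radius_incr_1, CV_radius_dLi2_coef. now apply Rabs_lt_1.
    - intro n. unfold PS_derive, PS_incr_1, dLi2_coef. field. apply INR_S_neq0. }
  pose proof (is_derive_0_eq K (-1) 1 HK x 0 Hx ltac:(lra)) as E.
  unfold K in E. rewrite !PSeries_incr_1, Rminus_0_r, ln_1 in E.
  unfold dLi2. lra.
Qed.

Lemma dLi2_eq x : -1 < x < 1 -> x <> 0 -> dLi2 x = - ln (1 - x) / x.
Proof. intros H H0. rewrite <- mul_dLi2 by auto. field. auto. Qed.

Lemma Li2_landen x : -1 < x < 1/2 -> Li2 x + Li2 (x / (x - 1)) = - / 2 * ln (1 - x) ^ 2.
Proof.
  intro Hx.
  set (h := fun t => Li2 t + Li2 (t / (t - 1)) + / 2 * ln (1 - t) ^ 2).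
  assert (Hd : forall t, -1 < t < 1/2 -> is_derive h t 0).
  { intros t Ht. unfold h.
    assert (Hz : -1 < t / (t - 1) < 1).
    { split; apply Rmult_lt_reg_r with (1 - t); try lra;
      replace (t / (t - 1) * (1 - t)) with (- t) by (field; lra); lra. }
    auto_derive; [repeat split; try (apply ex_derive_Li2; first [lra | exact Hz]); lra |].
    rewrite !Derive_Li2 by first [lra | exact Hz].
    change (t * / (t + - (1))) with (t / (t - 1)).
    change (1 + - t) with (1 - t). change (t + - (1)) with (t - 1).
    destruct (Req_dec t 0) as [->|Ht0].
    - replace (0 / (0 - 1)) with 0 by field. rewrite dLi2_0, Rminus_0_r, ln_1. field.
    - assert (t / (t - 1) <> 0) by (apply Rmult_integral_contrapositive;
        split; [| apply Rinv_neq_0_compat]; lra).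
      rewrite !dLi2_eq by lra.
      replace (1 - t / (t - 1)) with (/ (1 - t)) by (field; lra).
      rewrite ln_Rinv by lra. field. lra. }
  pose proof (is_derive_0_eq h (-1) (1/2) Hd x 0 Hx ltac:(lra)) as E.
  unfold h in E. replace (0 / (0 - 1)) with 0 in E by field.
  rewrite Li2_0, Rminus_0_r, ln_1 in E. lra.
Qed.

Lemma Li2_duplication x : -1 < x < 1 -> Li2 x + Li2 (- x) = / 2 * Li2 (x * x).
Proof.
  intro Hx.
  set (h := fun t => Li2 t + Li2 (- t) - / 2 * Li2 (t * t)).
  assert (Hd : forall t, -1 < t < 1 -> is_derive h t 0).
  { intros t Ht. unfold h.
    assert (Hz : -1 < t * t < 1) by nra.
    auto_derive; [repeat split; try (apply ex_derive_Li2; first [lra | exact Hz]); lra |].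
    rewrite !Derive_Li2 by lra.
    destruct (Req_dec t 0) as [->|Ht0].
    - rewrite Ropp_0, Rmult_0_l, dLi2_0. field.
    - rewrite !dLi2_eq by nra.
      replace (1 - t * t) with ((1 - t) * (1 - - t)) by ring.
      rewrite ln_mult by lra. field. auto. }
  pose proof (is_derive_0_eq h (-1) 1 Hd x 0 Hx ltac:(lra)) as E.
  unfold h in E. rewrite Ropp_0, Rmult_0_l, Li2_0 in E. lra.
Qed.

Definition five_term_defect (y t : R) : R :=
  Li2 t + Li2 y - Li2 (t * y) - Li2 (t * (1 - y) / (1 - t * y))
  - Li2 (y * (1 - t) / (1 - t * y)) - ln ((1 - t) / (1 - t * y)) * ln ((1 - y) / (1 - t * y)).

Lemma is_derive_five_term_defect y : 0 < y < 1 ->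
  forall t, -1 < t < 1 -> is_derive (five_term_defect y) t 0.
Proof.
  intros Hy t Ht. unfold five_term_defect.
  assert (D : 0 < 1 - t * y) by nra.
  assert (Hty : -1 < t * y < 1) by nra.
  assert (HX : -1 < t * (1 - y) / (1 - t * y) < 1).
  { split; apply (Rmult_lt_reg_r (1 - t * y)); auto;
      unfold Rdiv; rewrite Rmult_assoc, Rinv_l by lra; nra. }
  assert (HY : -1 < y * (1 - t) / (1 - t * y) < 1).
  { split; apply (Rmult_lt_reg_r (1 - t * y)); auto;
      unfold Rdiv; rewrite Rmult_assoc, Rinv_l by lra; nra. }
  assert (Hpos : forall u, 0 < u -> 0 < u / (1 - t * y))
    by (intros; apply Rdiv_lt_0_compat; lra).
  auto_derive.
  { repeat split; try apply ex_derive_Li2; auto; try lra; apply Hpos; lra. }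
  change (1 + - (t * y)) with (1 - t * y). change (1 + - t) with (1 - t).
  change (t * (1 - y) * / (1 - t * y)) with (t * (1 - y) / (1 - t * y)) in *.
  change (y * (1 - t) * / (1 - t * y)) with (y * (1 - t) / (1 - t * y)) in *.
  change ((1 - t) * / (1 - t * y)) with ((1 - t) / (1 - t * y)).
  change ((1 - y) * / (1 - t * y)) with ((1 - y) / (1 - t * y)).
  rewrite !Derive_Li2 by auto.
  rewrite !ln_div by lra.
  destruct (Req_dec t 0) as [->|Ht0].
  { replace (0 * y) with 0 by ring. replace (0 * (1 - y) / (1 - 0)) with 0 by field.
    replace (y * (1 - 0) / (1 - 0)) with y by field.
    rewrite dLi2_0, dLi2_eq, Rminus_0_r, ln_1 by lra. field. lra. }
  assert (y * (1 - t) / (1 - t * y) <> 0) by (apply Rgt_not_eq, Hpos; nra).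
  assert (t * (1 - y) / (1 - t * y) <> 0).
  { unfold Rdiv. apply Rmult_integral_contrapositive. split;
      [apply Rmult_integral_contrapositive | apply Rinv_neq_0_compat]; lra. }
  rewrite !dLi2_eq by (auto; nra).
  replace (1 - t * (1 - y) / (1 - t * y)) with ((1 - t) / (1 - t * y)) by (field; lra).
  replace (1 - y * (1 - t) / (1 - t * y)) with ((1 - y) / (1 - t * y)) by (field; lra).
  rewrite !ln_div by lra.
  field. repeat split; lra.
Qed.

Lemma Li2_five_term x y : 0 < x < 1 -> 0 < y < 1 ->
  Li2 x + Li2 y - Li2 (x * y)
    = Li2 (x * (1 - y) / (1 - x * y)) + Li2 (y * (1 - x) / (1 - x * y))
      + ln ((1 - x) / (1 - x * y)) * ln ((1 - y) / (1 - x * y)).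
Proof.
  intros Hx Hy.
  pose proof (is_derive_0_eq _ (-1) 1 (is_derive_five_term_defect y Hy) x 0
    ltac:(lra) ltac:(lra)) as E.
  unfold five_term_defect in E.
  replace (0 * y) with 0 in E by ring. replace (0 * (1 - y) / (1 - 0)) with 0 in E by field.
  replace (y * (1 - 0) / (1 - 0)) with y in E by field.
  replace ((1 - 0) / (1 - 0)) with 1 in E by field.
  rewrite ln_1, Li2_0 in E. lra.
Qed.

(* The integrals of Matsuoka's proof of zeta(2) = pi^2/6. *)
Definition wallis_I (n : nat) : R := RInt (fun x => cos x ^ (2 * n)) 0 (PI / 2).
Definition wallis_J (n : nat) : R := RInt (fun x => x ^ 2 * cos x ^ (2 * n)) 0 (PI / 2).

Lemma ex_RInt_of_ex_derive (f : R -> R) a b : (forall x, ex_derive f x) -> ex_RInt f a b.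
Proof.
  intro H. apply (ex_RInt_continuous (V := R_CompleteNormedModule)).
  intros x _. now apply continuous_of_ex_derive.
Qed.

Lemma is_RInt_wallis_I n : is_RInt (fun x => cos x ^ (2 * n)) 0 (PI / 2) (wallis_I n).
Proof.
  apply (RInt_correct (V := R_CompleteNormedModule)), ex_RInt_of_ex_derive.
  intro x. auto_derive. auto.
Qed.

Lemma is_RInt_wallis_J n : is_RInt (fun x => x ^ 2 * cos x ^ (2 * n)) 0 (PI / 2) (wallis_J n).
Proof.
  apply (RInt_correct (V := R_CompleteNormedModule)), ex_RInt_of_ex_derive.
  intro x. auto_derive. auto.
Qed.

Lemma is_RInt_antiderivative (F f : R -> R) a b v :
  (forall x, is_derive F x (f x)) -> (forall x, ex_derive f x) ->
  is_RInt f a b v -> v = F b - F a.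
Proof.
  intros HF Hf Hv.
  apply (is_RInt_unique (V := R_CompleteNormedModule)) in Hv. rewrite <- Hv.
  apply (is_RInt_unique (V := R_CompleteNormedModule)).
  apply (is_RInt_derive (V := R_CompleteNormedModule)); intros; auto.
  now apply continuous_of_ex_derive.
Qed.

Lemma eq_mod_sin2_cos2 x K P Q : P - Q = K * (sin x ^ 2 + cos x ^ 2 - 1) -> P = Q.
Proof.
  assert (E : sin x ^ 2 + cos x ^ 2 - 1 = 0) by (rewrite <- (sin2_cos2 x); unfold Rsqr; ring).
  intro H. rewrite E, Rmult_0_r in H. lra.
Qed.

Lemma is_derive_sin_cos_pow m x :
  is_derive (fun t => sin t * cos t ^ S m) x
    (INR (S (S m)) * cos x ^ S (S m) - INR (S m) * cos x ^ m).
Proof.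
  auto_derive; [auto|].
  change (match m with 0%nat => 1 | S _ => INR m + 1 end) with (INR (S m)).
  apply (eq_mod_sin2_cos2 x (- INR (S m) * cos x ^ m)). rewrite !S_INR. simpl pow. ring.
Qed.

Lemma is_derive_x2_sin_cos_pow m x :
  is_derive (fun t => INR (S (S m)) * (t ^ 2 * (sin t * cos t ^ S m)) + 2 * (t * cos t ^ S (S m))) x
    (2 * cos x ^ S (S m) + INR (S (S m)) ^ 2 * (x ^ 2 * cos x ^ S (S m))
     - INR (S (S m)) * INR (S m) * (x ^ 2 * cos x ^ m)).
Proof.
  auto_derive; [auto|].
  change (match m with 0%nat => 1 | S _ => INR m + 1 end) with (INR (S m)).
  change (match S m with 0%nat => 1 | S _ => INR (S m) + 1 end) with (INR (S (S m))).
  apply (eq_mod_sin2_cos2 x (- INR (S (S m)) * INR (S m) * x ^ 2 * cos x ^ m)).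
  rewrite !S_INR. simpl pow. ring.
Qed.

Lemma wallis_I_rec n : (2 * INR n + 2) * wallis_I (S n) = (2 * INR n + 1) * wallis_I n.
Proof.
  pose proof (is_RInt_minus _ _ _ _ _ _
    (is_RInt_scal _ _ _ (INR (S (S (2 * n)))) _ (is_RInt_wallis_I (S n)))
    (is_RInt_scal _ _ _ (INR (S (2 * n))) _ (is_RInt_wallis_I n))) as H.
  replace (2 * S n)%nat with (S (S (2 * n))) in H by lia.
  apply (is_RInt_antiderivative _ _ _ _ _ (is_derive_sin_cos_pow (2 * n))) in H;
    [|intro x; auto_derive; auto].
  change (minus ?a ?b) with (a - b) in H. change (scal ?a ?b) with (a * b) in H.
  rewrite !S_INR, mult_INR, cos_PI2, sin_0 in H. simpl in H. lra.
Qed.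

Lemma wallis_J_rec n :
  wallis_I (S n)
    = (INR n + 1) * (2 * INR n + 1) * wallis_J n - 2 * (INR n + 1) ^ 2 * wallis_J (S n).
Proof.
  pose proof (is_RInt_minus _ _ _ _ _ _
    (is_RInt_plus _ _ _ _ _ _
      (is_RInt_scal _ _ _ 2 _ (is_RInt_wallis_I (S n)))
      (is_RInt_scal _ _ _ (INR (S (S (2 * n))) ^ 2) _ (is_RInt_wallis_J (S n))))
    (is_RInt_scal _ _ _ (INR (S (S (2 * n))) * INR (S (2 * n))) _ (is_RInt_wallis_J n))) as H.
  replace (2 * S n)%nat with (S (S (2 * n))) in H by lia.
  apply (is_RInt_antiderivative _ _ _ _ _ (is_derive_x2_sin_cos_pow (2 * n))) in H;
    [|intro x; auto_derive; auto].
  change (minus ?a ?b) with (a - b) in H. change (plus ?a ?b) with (a + b) in H.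
  change (scal ?a ?b) with (a * b) in H.
  rewrite !S_INR, mult_INR, cos_PI2, sin_0 in H. simpl in H. lra.
Qed.

Lemma wallis_I_0 : wallis_I 0 = PI / 2.
Proof.
  pose proof (is_RInt_wallis_I 0) as H.
  apply (is_RInt_antiderivative (fun x => x)) in H; [lra | |];
    intro x; auto_derive; auto.
Qed.

Lemma wallis_J_0 : wallis_J 0 = (PI / 2) ^ 3 / 3.
Proof.
  pose proof (is_RInt_wallis_J 0) as H.
  apply (is_RInt_antiderivative (fun x => x ^ 3 / 3)) in H;
    [rewrite H; field | intro x; auto_derive; [auto | simpl; field] | intro x; auto_derive; auto].
Qed.

Lemma wallis_I_S n : wallis_I (S n) = (2 * INR n + 1) / (2 * INR n + 2) * wallis_I n.
Proof.
  pose proof (pos_INR n). apply (Rmult_eq_reg_l (2 * INR n + 2)); [|lra].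
  rewrite wallis_I_rec. field. lra.
Qed.

Lemma wallis_I_pos n : 0 < wallis_I n.
Proof.
  induction n as [|n IH].
  - rewrite wallis_I_0. apply PI2_RGT_0.
  - rewrite wallis_I_S. pose proof (pos_INR n).
    apply Rmult_lt_0_compat; [apply Rdiv_lt_0_compat|]; lra.
Qed.

Lemma RInt_le_R (f g : R -> R) a b : a <= b ->
  (forall x, ex_derive f x) -> (forall x, ex_derive g x) ->
  (forall x, a < x < b -> f x <= g x) -> RInt f a b <= RInt g a b.
Proof. intros Hab Hf Hg. apply RInt_le; [exact Hab | apply ex_RInt_of_ex_derive ..]; auto. Qed.

Lemma wallis_J_nonneg n : 0 <= wallis_J n.
Proof.
  assert (E : RInt (fun _ : R => 0) 0 (PI / 2) = 0) by (rewrite RInt_const; apply Rmult_0_r).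
  rewrite <- E. unfold wallis_J.
  apply RInt_le_R; [pose proof PI2_RGT_0; lra | intro; auto_derive; auto .. |].
  intros x _. rewrite pow_mult. apply Rmult_le_pos; [|apply pow_le]; apply pow2_ge_0.
Qed.

Lemma xcos_le_sin x : 0 <= x <= PI / 2 -> x * cos x <= sin x.
Proof.
  intro Hx.
  destruct (MVT_gen (fun t => sin t - t * cos t) 0 x (fun t => t * sin t)) as [c [Hc E]].
  - intros t _. auto_derive; [auto | ring].
  - intros t _. apply continuity_pt_filterlim.
    apply (continuous_of_ex_derive (fun t => sin t - t * cos t)). auto_derive. auto.
  - rewrite Rmin_left, Rmax_right in Hc by lra. rewrite sin_0, Rmult_0_l in E.
    assert (0 <= sin c) by (apply sin_ge_0; pose proof PI2_RGT_0; lra).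
    assert (0 <= c * sin c * (x - 0)) by (apply Rmult_le_pos; [apply Rmult_le_pos|]; lra).
    lra.
Qed.

Lemma wallis_J_S_le n : wallis_J (S n) <= wallis_I n - wallis_I (S n).
Proof.
  unfold wallis_I at 1 2. rewrite <- (RInt_minus (V := R_CompleteNormedModule))
    by (apply ex_RInt_of_ex_derive; intro; auto_derive; auto).
  change (fun x => minus (cos x ^ (2 * n)) (cos x ^ (2 * S n)))
    with (fun x => cos x ^ (2 * n) - cos x ^ (2 * S n)).
  apply RInt_le_R; [pose proof PI2_RGT_0; lra | intro; auto_derive; auto .. |].
  intros x Hx.
  replace (2 * S n)%nat with (S (S (2 * n))) by lia. simpl pow.
  assert (Hsc := xcos_le_sin x ltac:(lra)).
  assert (0 <= cos x) by (apply cos_ge_0; pose proof PI2_RGT_0; lra).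
  assert (0 <= cos x ^ (2 * n)) by (rewrite pow_mult; apply pow_le, pow2_ge_0).
  assert (x ^ 2 * cos x ^ 2 <= sin x ^ 2).
  { rewrite <- Rpow_mult_distr. apply pow_incr. split; [apply Rmult_le_pos|]; lra. }
  pose proof (sin2_cos2 x) as Hp. unfold Rsqr in Hp. simpl in *. nra.
Qed.

Lemma inv_sq_wallis_telescope n :
  / (INR n + 1) ^ 2 = 2 * (wallis_J n / wallis_I n) - 2 * (wallis_J (S n) / wallis_I (S n)).
Proof.
  pose proof (wallis_J_rec n). pose proof (wallis_I_S n). pose proof (pos_INR n).
  pose proof (wallis_I_pos n). pose proof (wallis_I_pos (S n)).
  replace (wallis_J (S n))
    with (((INR n + 1) * (2 * INR n + 1) * wallis_J n - wallis_I (S n)) / (2 * (INR n + 1) ^ 2))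
    by (field_simplify_eq; lra).
  rewrite H0. field. repeat split; lra.
Qed.

Lemma sum_inv_sq_wallis N :
  sum_n (fun k => / INR (S k) ^ 2) N = PI ^ 2 / 6 - 2 * (wallis_J (S N) / wallis_I (S N)).
Proof.
  induction N as [|N IH].
  - rewrite sum_O. pose proof (inv_sq_wallis_telescope 0) as T.
    rewrite wallis_I_0, wallis_J_0 in T. simpl INR in *. pose proof PI_RGT_0.
    replace (2 * ((PI / 2) ^ 3 / 3 / (PI / 2))) with (PI ^ 2 / 6) in T by (field; lra).
    replace (1 ^ 2) with ((0 + 1) ^ 2) by ring. lra.
  - rewrite sum_Sn, IH. pose proof (inv_sq_wallis_telescope (S N)) as T.
    rewrite <- S_INR in T. change (plus ?a ?b) with (a + b). lra.
Qed.

Lemma wallis_ratio_bound n : 0 <= wallis_J (S n) / wallis_I (S n) <= / INR (S n).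
Proof.
  pose proof (wallis_J_nonneg (S n)). pose proof (wallis_I_pos (S n)).
  pose proof (wallis_I_pos n). pose proof (wallis_J_S_le n). pose proof (pos_INR n).
  split; [apply Rdiv_le_0_compat; lra|].
  apply Rle_trans with ((wallis_I n - wallis_I (S n)) / wallis_I (S n)).
  - apply Rmult_le_compat_r; [left; apply Rinv_0_lt_compat|]; lra.
  - replace ((wallis_I n - wallis_I (S n)) / wallis_I (S n)) with (/ (2 * INR n + 1))
      by (rewrite wallis_I_S; field; lra).
    rewrite S_INR. apply Rinv_le_contravar; lra.
Qed.

Lemma basel : is_series (fun k => / INR (S k) ^ 2) (PI ^ 2 / 6).
Proof.
  assert (L : is_lim_seq (fun N => wallis_J (S N) / wallis_I (S N)) 0).
  { apply (is_lim_seq_le_le (fun _ => 0) _ (fun n => / INR (S n)));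
      [apply wallis_ratio_bound | apply is_lim_seq_const | apply is_lim_seq_inv_S]. }
  assert (H : is_lim_seq (sum_n (fun k => / INR (S k) ^ 2)) (PI ^ 2 / 6)).
  { apply (is_lim_seq_ext (fun N => PI ^ 2 / 6 - 2 * (wallis_J (S N) / wallis_I (S N))));
      [intro N; now rewrite sum_inv_sq_wallis|].
    replace (Finite (PI ^ 2 / 6)) with (Finite (PI ^ 2 / 6 - 2 * 0)) by (f_equal; ring).
    apply is_lim_seq_minus'; [apply is_lim_seq_const|].
    apply is_lim_seq_mult'; [apply is_lim_seq_const | exact L]. }
  exact H.
Qed.

Lemma Li2_1 : Li2 1 = PI ^ 2 / 6.
Proof.
  apply is_series_unique, (is_series_ext (fun k => / INR (S k) ^ 2)); [|exact basel].
  intro n. rewrite pow1. unfold Rdiv. now rewrite Rmult_1_l.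
Qed.

Lemma ln_le_sub_1 y : 0 < y -> ln y <= y - 1.
Proof. intro H. pose proof (exp_ineq1_le (ln y)). rewrite exp_ln in *; lra. Qed.

Lemma Rabs_ln_mul_ln_1_sub t : 0 < t < 1/2 -> Rabs (ln t * ln (1 - t)) <= 4 * sqrt t.
Proof.
  intro Ht.
  assert (Hs : 0 < sqrt t) by (apply sqrt_lt_R0; lra).
  assert (Hss : sqrt t * sqrt t = t) by (apply sqrt_sqrt; lra).
  assert (L1 : ln (1 - t) <= 0) by (pose proof (ln_le_sub_1 (1 - t)); lra).
  assert (L2 : - (2 * t) <= ln (1 - t)).
  { pose proof (ln_le_sub_1 (/ (1 - t)) ltac:(apply Rinv_0_lt_compat; lra)) as H.
    rewrite ln_Rinv in H by lra.
    assert (/ (1 - t) - 1 <= 2 * t).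
    { apply (Rmult_le_reg_r (1 - t)); [lra|].
      rewrite Rmult_minus_distr_r, Rinv_l by lra. nra. }
    lra. }
  assert (L3 : ln t < 0) by (rewrite <- ln_1; apply ln_increasing; lra).
  assert (L4 : - (2 / sqrt t) <= ln t).
  { pose proof (ln_le_sub_1 (/ sqrt t) ltac:(apply Rinv_0_lt_compat; lra)) as H.
    rewrite ln_Rinv in H by lra.
    assert (ln t = 2 * ln (sqrt t)) by (rewrite <- Hss at 1; rewrite ln_mult; lra).
    unfold Rdiv. lra. }
  rewrite Rabs_pos_eq by nra.
  assert (E : 2 / sqrt t * (2 * t) = 4 * sqrt t) by (rewrite <- Hss at 2; field; lra).
  rewrite <- E. nra.
Qed.

Lemma lim_ln_mul_ln_1_sub : filterlim (fun t => ln t * ln (1 - t)) (at_right 0) (locally 0).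
Proof.
  apply filterlim_locally. intros [eps He].
  assert (Hd : 0 < Rmin (1/2) ((eps / 4) ^ 2)) by (apply Rmin_glb_lt; [lra | apply pow_lt; lra]).
  exists (mkposreal _ Hd). intros y Hy Hpos. simpl in *.
  unfold ball in *; simpl in *. unfold AbsRing_ball, abs, minus, plus, opp in *; simpl in *.
  rewrite Ropp_0, Rplus_0_r, Rabs_pos_eq in Hy by lra. rewrite Ropp_0, Rplus_0_r.
  assert (y < 1/2) by (eapply Rlt_le_trans; [exact Hy | apply Rmin_l]).
  assert (sqrt y < eps / 4).
  { rewrite <- (sqrt_pow2 (eps / 4)) by lra.
    apply sqrt_lt_1; [lra | apply pow_le; lra |].
    eapply Rlt_le_trans; [exact Hy | apply Rmin_r]. }
  pose proof (Rabs_ln_mul_ln_1_sub y ltac:(lra)). lra.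
Qed.

Lemma lim_Li2_0 : filterlim Li2 (at_right 0) (locally 0).
Proof.
  apply (filterlim_filter_le_1 (F := locally 0)); [apply filter_le_within|].
  apply (filterlim_ext (PSeries Li2_coef)); [intro t; now rewrite Li2_PSeries|].
  assert (C : continuity_pt (PSeries Li2_coef) 0).
  { apply PSeries_continuity. rewrite CV_radius_Li2_coef. simpl. rewrite Rabs_R0. lra. }
  apply continuity_pt_filterlim in C. now rewrite PSeries_0 in C.
Qed.

Lemma lim_Li2_1 : filterlim Li2 (at_left 1) (locally (Li2 1)).
Proof.
  apply (filterlim_ext (PSeries Li2_coef)); [intro t; now rewrite Li2_PSeries|].
  rewrite Li2_PSeries.
  pose proof (Abel Li2_coef) as H. rewrite CV_radius_Li2_coef in H. simpl in H.
  apply H; [simpl; lra | simpl; lra |].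
  apply ex_pseries_incr_1, ex_pseries_1. exists (PI ^ 2 / 6). exact basel.
Qed.

Lemma lim_1_sub_at_right : filterlim (fun t => 1 - t) (at_right 0) (at_left 1).
Proof.
  intros P [eps Heps]. exists eps. intros y Hy Hpos. apply Heps; [|lra].
  unfold ball in *; simpl in *. unfold AbsRing_ball, abs, minus, plus, opp in *; simpl in *.
  replace (1 - y + - (1)) with (- (y + - 0)) by ring. now rewrite Rabs_Ropp.
Qed.

Lemma filterlim_Rplus {T} (F : (T -> Prop) -> Prop) {FF : Filter F} (f g : T -> R) a b :
  filterlim f F (locally a) -> filterlim g F (locally b) ->
  filterlim (fun x => f x + g x) F (locally (a + b)).
Proof. intros Hf Hg. exact (filterlim_comp_2 f g Rplus Hf Hg (filterlim_plus a b)). Qed.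

Lemma Li2_reflection x : 0 < x < 1 -> Li2 x + Li2 (1 - x) = PI ^ 2 / 6 - ln x * ln (1 - x).
Proof.
  intro Hx.
  set (h := fun t => Li2 t + Li2 (1 - t) + ln t * ln (1 - t)).
  assert (Hd : forall t, 0 < t < 1 -> is_derive h t 0).
  { intros t Ht. unfold h.
    auto_derive; [repeat split; try apply ex_derive_Li2; lra|].
    rewrite !Derive_Li2 by lra. change (1 + - t) with (1 - t).
    rewrite !dLi2_eq by lra. replace (1 - (1 - t)) with t by ring. field. lra. }
  assert (Hlim : filterlim h (at_right 0) (locally (0 + Li2 1 + 0))).
  { apply (filterlim_Rplus (at_right 0));
      [apply (filterlim_Rplus (at_right 0)) | exact lim_ln_mul_ln_1_sub].
    - exact lim_Li2_0.
    - exact (filterlim_comp _ _ _ _ _ _ _ _ lim_1_sub_at_right lim_Li2_1). }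
  assert (Hconst : filterlim h (at_right 0) (locally (h x))).
  { apply (filterlim_ext_loc (fun _ => h x)); [|apply filterlim_const].
    exists (mkposreal 1 Rlt_0_1). intros y Hy Hpos.
    unfold ball in *; simpl in *. unfold AbsRing_ball, abs, minus, plus, opp in *; simpl in *.
    rewrite Ropp_0, Rplus_0_r, Rabs_pos_eq in Hy by lra.
    apply (is_derive_0_eq h 0 1 Hd); lra. }
  pose proof (filterlim_locally_unique _ _ _ Hconst Hlim) as E.
  unfold h in E. rewrite Li2_1 in E. lra.
Qed.

(* The partner points are free variables tied by polynomial equations, so that instances
   at explicit points of Q(sqrt5) reduce to field identities. *)
Lemma Li2_reflection_at x y : 0 < x < 1 -> x + y = 1 -> Li2 x + Li2 y = PI ^ 2 / 6 - ln x * ln y.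
Proof. intros H E. replace y with (1 - x) by lra. now apply Li2_reflection. Qed.

Lemma Li2_landen_at x y z : -1 < x < 1/2 -> y * (x - 1) = x -> z = 1 - x ->
  Li2 x + Li2 y = - / 2 * ln z ^ 2.
Proof.
  intros H Ey ->. replace y with (x / (x - 1))
    by (apply (Rmult_eq_reg_r (x - 1)); [rewrite Ey; field |]; lra).
  now apply Li2_landen.
Qed.

Lemma Li2_duplication_at x y z : -1 < x < 1 -> y = - x -> z = x * x ->
  Li2 x + Li2 y = / 2 * Li2 z.
Proof. intros H -> ->. now apply Li2_duplication. Qed.

Lemma Li2_five_term_at x y p X Y A B : 0 < x < 1 -> 0 < y < 1 -> p = x * y ->
  X * (1 - p) = x * (1 - y) -> Y * (1 - p) = y * (1 - x) ->
  A * (1 - p) = 1 - x -> B * (1 - p) = 1 - y ->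
  Li2 x + Li2 y - Li2 p = Li2 X + Li2 Y + ln A * ln B.
Proof.
  intros Hx Hy -> EX EY EA EB.
  assert (D : 1 - x * y <> 0) by nra.
  replace X with (x * (1 - y) / (1 - x * y))
    by (apply (Rmult_eq_reg_r (1 - x * y)); [rewrite EX; field |]; auto).
  replace Y with (y * (1 - x) / (1 - x * y))
    by (apply (Rmult_eq_reg_r (1 - x * y)); [rewrite EY; field |]; auto).
  replace A with ((1 - x) / (1 - x * y))
    by (apply (Rmult_eq_reg_r (1 - x * y)); [rewrite EA; field |]; auto).
  replace B with ((1 - y) / (1 - x * y))
    by (apply (Rmult_eq_reg_r (1 - x * y)); [rewrite EB; field |]; auto).
  now apply Li2_five_term.
Qed.

Lemma pow_sqrt5_SS k : sqrt 5 ^ S (S k) = 5 * sqrt 5 ^ k.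
Proof. simpl. rewrite <- Rmult_assoc, sqrt_sqrt by lra. ring. Qed.

Lemma sqrt5_bounds : 2236067 / 1000000 < sqrt 5 < 2236068 / 1000000.
Proof.
  split.
  - apply Rsqr_incrst_0; [| lra | apply sqrt_pos]. rewrite Rsqr_sqrt by lra. unfold Rsqr. lra.
  - apply Rsqr_incrst_0; [| apply sqrt_pos | lra]. rewrite Rsqr_sqrt by lra. unfold Rsqr. lra.
Qed.

Ltac sqrt5_normalize :=
  unfold alpha, beta, Rdiv; ring_simplify; repeat rewrite pow_sqrt5_SS; ring_simplify.

Ltac sqrt5_field := sqrt5_normalize; field.

Ltac sqrt5_bound := pose proof sqrt5_bounds; sqrt5_normalize; lra.

Ltac sqrt5_side :=
  lazymatch goal with
  | |- _ < _ < _ => split; sqrt5_bound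
  | |- _ = _ => sqrt5_field
  | |- _ => sqrt5_bound
  end.

Lemma alpha_pos : 0 < alpha.
Proof. pose proof sqrt5_bounds. unfold alpha. lra. Qed.

Lemma ln_sqrt5 : ln (sqrt 5) = ln 5 / 2.
Proof.
  assert (H : ln (sqrt 5 * sqrt 5) = ln 5) by (rewrite sqrt_sqrt; lra).
  rewrite ln_mult in H by (apply sqrt_lt_R0; lra). lra.
Qed.

Lemma IZR_to_nat_diff z : IZR z = INR (Z.to_nat z) - INR (Z.to_nat (- z)).
Proof.
  destruct z as [|p|p]; simpl; rewrite ?INR_IPR; [ring | |]; unfold IZR; ring.
Qed.

Lemma ln_monomial x (a b c d : Z) : 0 < x ->
  x * (alpha ^ Z.to_nat (- a) * 2 ^ Z.to_nat (- b) * 3 ^ Z.to_nat (- c) * sqrt 5 ^ Z.to_nat (- d))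
    = alpha ^ Z.to_nat a * 2 ^ Z.to_nat b * 3 ^ Z.to_nat c * sqrt 5 ^ Z.to_nat d ->
  ln x = IZR a * ln alpha + IZR b * ln 2 + IZR c * ln 3 + IZR d / 2 * ln 5.
Proof.
  intros Hx H. apply (f_equal ln) in H.
  pose proof alpha_pos. assert (0 < sqrt 5) by (apply sqrt_lt_R0; lra).
  assert (P : forall u n, 0 < u -> 0 < u ^ n) by (intros; apply pow_lt; auto).
  rewrite !ln_mult in H by (repeat apply Rmult_lt_0_compat; try apply P; lra).
  rewrite !ln_pow, ln_sqrt5 in H by lra.
  rewrite (IZR_to_nat_diff a), (IZR_to_nat_diff b), (IZR_to_nat_diff c), (IZR_to_nat_diff d).
  lra.
Qed.

(* Real numerals are [IZR] of integer literals, so the exponents are given as numerals. *)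
Ltac ln_expand a b c d :=
  lazymatch constr:((a, b, c, d)) with
  | (IZR ?a, IZR ?b, IZR ?c, IZR ?d) =>
      rewrite (ln_monomial _ a b c d); [lra | sqrt5_bound | simpl; sqrt5_field]
  end.

Lemma Li2_beta2_half_add_Li2_neg_beta3 :
  Li2 (beta ^ 2 / 2) + Li2 (- beta ^ 3)
    = PI ^ 2 / 12 - ln 2 ^ 2 / 2 - 2 * ln alpha ^ 2 + ln alpha * ln 2.
Proof.
  assert (F : Li2 (1 / 2) + Li2 (beta ^ 2) - Li2 (beta ^ 2 / 2)
              = Li2 (beta ^ 2) + Li2 (- beta ^ 3) + ln (- beta) * ln (2 * beta ^ 2))
    by (apply Li2_five_term_at; sqrt5_side).
  assert (R : Li2 (1 / 2) + Li2 (1 / 2) = PI ^ 2 / 6 - ln (1 / 2) * ln (1 / 2))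
    by (apply Li2_reflection_at; lra).
  assert (L1 : ln (- beta) = - ln alpha) by ln_expand (-1) 0 0 0.
  assert (L2 : ln (2 * beta ^ 2) = -2 * ln alpha + ln 2) by ln_expand (-2) 1 0 0.
  assert (L3 : ln (1 / 2) = - ln 2) by ln_expand 0 (-1) 0 0.
  rewrite L1, L2 in F. rewrite L3 in R. lra.
Qed.

Lemma Li2_alpha_half_add_Li2_beta_half :
  Li2 (alpha / 2) + Li2 (beta / 2) = PI ^ 2 / 12 + 2 * ln alpha ^ 2 - ln 2 ^ 2.
Proof.
  assert (R : Li2 (alpha / 2) + Li2 (beta ^ 2 / 2)
              = PI ^ 2 / 6 - ln (alpha / 2) * ln (beta ^ 2 / 2))
    by (apply Li2_reflection_at; sqrt5_side).
  assert (L : Li2 (beta / 2) + Li2 (- beta ^ 3) = - / 2 * ln (alpha ^ 2 / 2) ^ 2)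
    by (apply Li2_landen_at; sqrt5_side).
  assert (L1 : ln (alpha / 2) = ln alpha - ln 2) by ln_expand 1 (-1) 0 0.
  assert (L2 : ln (beta ^ 2 / 2) = -2 * ln alpha - ln 2) by ln_expand (-2) (-1) 0 0.
  assert (L3 : ln (alpha ^ 2 / 2) = 2 * ln alpha - ln 2) by ln_expand 2 (-1) 0 0.
  rewrite L1, L2 in R. rewrite L3 in L.
  pose proof Li2_beta2_half_add_Li2_neg_beta3. lra.
Qed.

Lemma Li2_alpha3_fifth_add_Li2_beta3_fifth :
  Li2 (alpha ^ 3 / 5) + Li2 (beta ^ 3 / 5)
    = PI ^ 2 / 12 + 6 * ln alpha ^ 2 - 2 * ln 2 ^ 2 + 2 * ln 2 * ln 5
      - ln 5 ^ 2 - Li2 (- (1 / 4)).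
Proof.
  assert (R : Li2 (alpha ^ 3 / 5) + Li2 (2 * beta ^ 2 / 5)
              = PI ^ 2 / 6 - ln (alpha ^ 3 / 5) * ln (2 * beta ^ 2 / 5))
    by (apply Li2_reflection_at; sqrt5_side).
  assert (L : Li2 (beta ^ 3 / 5) + Li2 (- beta ^ 5 / 2) = - / 2 * ln (2 * alpha ^ 2 / 5) ^ 2)
    by (apply Li2_landen_at; sqrt5_side).
  assert (F : Li2 (- beta ^ 3) + Li2 (beta ^ 2 / 2) - Li2 (- beta ^ 5 / 2)
              = Li2 (1 / 5) + Li2 (2 * beta ^ 2 / 5) + ln (4 / 5) * ln (alpha ^ 3 / 5))
    by (apply Li2_five_term_at; sqrt5_side).
  assert (L' : Li2 (1 / 5) + Li2 (- (1 / 4)) = - / 2 * ln (4 / 5) ^ 2)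
    by (apply Li2_landen_at; lra).
  assert (L1 : ln (alpha ^ 3 / 5) = 3 * ln alpha - ln 5) by ln_expand 3 0 0 (-2).
  assert (L2 : ln (2 * beta ^ 2 / 5) = -2 * ln alpha + ln 2 - ln 5) by ln_expand (-2) 1 0 (-2).
  assert (L3 : ln (2 * alpha ^ 2 / 5) = 2 * ln alpha + ln 2 - ln 5) by ln_expand 2 1 0 (-2).
  assert (L4 : ln (4 / 5) = 2 * ln 2 - ln 5) by ln_expand 0 2 0 (-2).
  rewrite L1, L2 in R. rewrite L3 in L. rewrite L4, L1 in F. rewrite L4 in L'.
  pose proof Li2_beta2_half_add_Li2_neg_beta3. lra.
Qed.

Lemma Li2_alpha2_quarter_add_Li2_beta2_quarter :
  Li2 (alpha ^ 2 / 4) + Li2 (beta ^ 2 / 4)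
    = PI ^ 2 / 6 + 2 * ln alpha ^ 2 - / 2 * ln 5 ^ 2 + 2 * ln 2 * ln 5
      - 4 * ln 2 ^ 2 - Li2 (1 / 5).
Proof.
  assert (Da : Li2 (alpha / 2) + Li2 (- alpha / 2) = / 2 * Li2 (alpha ^ 2 / 4))
    by (apply Li2_duplication_at; sqrt5_side).
  assert (Db : Li2 (beta / 2) + Li2 (- beta / 2) = / 2 * Li2 (beta ^ 2 / 4))
    by (apply Li2_duplication_at; sqrt5_side).
  assert (La : Li2 (- alpha / 2) + Li2 (sqrt 5 / 5) = - / 2 * ln (sqrt 5 * alpha / 2) ^ 2)
    by (apply Li2_landen_at; sqrt5_side).
  assert (Lb : Li2 (- beta / 2) + Li2 (- sqrt 5 / 5) = - / 2 * ln (- sqrt 5 * beta / 2) ^ 2)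
    by (apply Li2_landen_at; sqrt5_side).
  assert (D : Li2 (sqrt 5 / 5) + Li2 (- sqrt 5 / 5) = / 2 * Li2 (1 / 5))
    by (apply Li2_duplication_at; sqrt5_side).
  assert (L1 : ln (sqrt 5 * alpha / 2) = ln alpha - ln 2 + ln 5 / 2) by ln_expand 1 (-1) 0 1.
  assert (L2 : ln (- sqrt 5 * beta / 2) = - ln alpha - ln 2 + ln 5 / 2) by ln_expand (-1) (-1) 0 1.
  rewrite L1 in La. rewrite L2 in Lb.
  pose proof Li2_alpha_half_add_Li2_beta_half. lra.
Qed.

Lemma Li2_alpha_third_add_Li2_beta_third :
  Li2 (alpha / 3) + Li2 (beta / 3)
    = ln alpha ^ 2 - / 4 * ln 5 ^ 2 + ln 3 * ln 5 - ln 3 ^ 2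
      + 3 / 2 * Li2 (1 / 5) - / 2 * Li2 (1 / 25).
Proof.
  assert (F : Li2 (alpha / 3) + Li2 (- beta / 2) - Li2 (1 / 6)
              = Li2 (sqrt 5 / 5) + Li2 (sqrt 5 * beta ^ 2 / 5)
                + ln (- 2 * sqrt 5 * beta / 5) * ln (- 3 * sqrt 5 * beta / 5))
    by (apply Li2_five_term_at; sqrt5_side).
  assert (L : Li2 (beta / 3) + Li2 (sqrt 5 * beta ^ 2 / 5) = - / 2 * ln (sqrt 5 * alpha / 3) ^ 2)
    by (apply Li2_landen_at; sqrt5_side).
  assert (Lb : Li2 (- beta / 2) + Li2 (- sqrt 5 / 5) = - / 2 * ln (- sqrt 5 * beta / 2) ^ 2)
    by (apply Li2_landen_at; sqrt5_side).
  assert (D : Li2 (sqrt 5 / 5) + Li2 (- sqrt 5 / 5) = / 2 * Li2 (1 / 5))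
    by (apply Li2_duplication_at; sqrt5_side).
  assert (L' : Li2 (- (1 / 5)) + Li2 (1 / 6) = - / 2 * ln (6 / 5) ^ 2)
    by (apply Li2_landen_at; lra).
  assert (D' : Li2 (1 / 5) + Li2 (- (1 / 5)) = / 2 * Li2 (1 / 25))
    by (apply Li2_duplication_at; lra).
  assert (L1 : ln (- 2 * sqrt 5 * beta / 5) = - ln alpha + ln 2 - ln 5 / 2)
    by ln_expand (-1) 1 0 (-1).
  assert (L2 : ln (- 3 * sqrt 5 * beta / 5) = - ln alpha + ln 3 - ln 5 / 2)
    by ln_expand (-1) 0 1 (-1).
  assert (L3 : ln (sqrt 5 * alpha / 3) = ln alpha - ln 3 + ln 5 / 2) by ln_expand 1 0 (-1) 1.
  assert (L4 : ln (- sqrt 5 * beta / 2) = - ln alpha - ln 2 + ln 5 / 2) by ln_expand (-1) (-1) 0 1.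
  assert (L5 : ln (6 / 5) = ln 2 + ln 3 - ln 5) by ln_expand 0 1 1 (-2).
  rewrite L1, L2 in F. rewrite L3 in L. rewrite L4 in Lb. rewrite L5 in L'.
  lra.
Qed.

Lemma Li2_reflection_inverse_pair u v : 0 < u -> u * v = 1 ->
  Li2 (u / (u + v)) + Li2 (v / (u + v)) = PI ^ 2 / 6 + ln u ^ 2 - ln (u + v) ^ 2.
Proof.
  intros Hu Huv.
  assert (Hv : v = / u) by (field_simplify_eq; lra).
  assert (0 < v) by (rewrite Hv; now apply Rinv_0_lt_compat).
  rewrite Li2_reflection_at.
  - unfold Rdiv. rewrite !ln_mult, !ln_Rinv, Hv, ln_Rinv by
      (try apply Rinv_0_lt_compat; lra). ring.
  - split; [apply Rdiv_lt_0_compat; lra|].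
    apply Rmult_lt_reg_r with (u + v); [lra|]. field_simplify; lra.
  - field. lra.
Qed.

Lemma alpha_mul_beta : alpha * beta = -1.
Proof. unfold alpha, beta. pose proof (sqrt_sqrt 5 ltac:(lra)). nra. Qed.

Lemma alpha_sub_beta : alpha - beta = sqrt 5.
Proof. unfold alpha, beta. field. Qed.

Lemma pow_alpha_mul_pow_beta n : alpha ^ n * beta ^ n = (-1) ^ n.
Proof. now rewrite <- Rpow_mult_distr, alpha_mul_beta. Qed.

Lemma Li2_lucas r : Nat.Even r ->
  Li2 (alpha ^ r / Luc r) + Li2 (beta ^ r / Luc r)
    = PI ^ 2 / 6 + INR r ^ 2 * ln alpha ^ 2 - ln (Luc r) ^ 2.
Proof.
  intros [k ->]. unfold Luc. pose proof alpha_pos.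
  rewrite Li2_reflection_inverse_pair, ln_pow by
    (try apply pow_lt; try rewrite pow_alpha_mul_pow_beta, pow_1_even; lra).
  ring.
Qed.

Lemma Li2_fibonacci r : Nat.Odd r ->
  Li2 (alpha ^ r / (sqrt 5 * Fib r)) + Li2 (- beta ^ r / (sqrt 5 * Fib r))
    = PI ^ 2 / 6 + INR r ^ 2 * ln alpha ^ 2 - / 4 * ln 5 ^ 2 - ln 5 * ln (Fib r) - ln (Fib r) ^ 2.
Proof.
  intros [k ->]. pose proof alpha_pos.
  assert (Hprod : alpha ^ (2 * k + 1) * - beta ^ (2 * k + 1) = 1).
  { rewrite <- Ropp_mult_distr_r, pow_alpha_mul_pow_beta, Nat.add_1_r, pow_1_odd. ring. }
  assert (Hsum : sqrt 5 * Fib (2 * k + 1) = alpha ^ (2 * k + 1) + - beta ^ (2 * k + 1)).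
  { unfold Fib. rewrite alpha_sub_beta. field. apply Rgt_not_eq, sqrt_lt_R0. lra. }
  assert (Ha : 0 < alpha ^ (2 * k + 1)) by (apply pow_lt; lra).
  assert (Hb : 0 < - beta ^ (2 * k + 1)) by nra.
  assert (HF : 0 < Fib (2 * k + 1)).
  { apply Rmult_lt_reg_l with (sqrt 5); [apply sqrt_lt_R0; lra|]. lra. }
  rewrite Hsum, Li2_reflection_inverse_pair, ln_pow by lra.
  rewrite <- Hsum, ln_mult, ln_sqrt5 by (try apply sqrt_lt_R0; lra).
  field.
Qed.

Theorem theorem14 :
  Li2 (alpha / 2) + Li2 (beta / 2)
    = PI ^ 2 / 12 + 2 * ln alpha ^ 2 - ln 2 ^ 2
  /\
  Li2 (alpha ^ 3 / 5) + Li2 (beta ^ 3 / 5)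
    = PI ^ 2 / 12 + 6 * ln alpha ^ 2 - 2 * ln 2 ^ 2 + 2 * ln 2 * ln 5
      - ln 5 ^ 2 - Li2 (- (1 / 4))
  /\
  (forall r : nat, Nat.Even r ->
     Li2 (alpha ^ r / Luc r) + Li2 (beta ^ r / Luc r)
       = PI ^ 2 / 6 + INR r ^ 2 * ln alpha ^ 2 - ln (Luc r) ^ 2)
  /\
  Li2 (alpha ^ 2 / 3) + Li2 (beta ^ 2 / 3)
    = PI ^ 2 / 6 + 4 * ln alpha ^ 2 - ln 3 ^ 2
  /\
  (forall r : nat, Nat.Odd r ->
     Li2 (alpha ^ r / (sqrt 5 * Fib r)) + Li2 (- beta ^ r / (sqrt 5 * Fib r))
       = PI ^ 2 / 6 + INR r ^ 2 * ln alpha ^ 2 - / 4 * ln 5 ^ 2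
         - ln 5 * ln (Fib r) - ln (Fib r) ^ 2)
  /\
  Li2 (alpha / sqrt 5) + Li2 (- beta / sqrt 5)
    = PI ^ 2 / 6 + ln alpha ^ 2 - / 4 * ln 5 ^ 2
  /\
  Li2 (alpha ^ 2 / 4) + Li2 (beta ^ 2 / 4)
    = PI ^ 2 / 6 + 2 * ln alpha ^ 2 - / 2 * ln 5 ^ 2 + 2 * ln 2 * ln 5
      - 4 * ln 2 ^ 2 - Li2 (1 / 5)
  /\
  Li2 (alpha / 3) + Li2 (beta / 3)
    = ln alpha ^ 2 - / 4 * ln 5 ^ 2 + ln 3 * ln 5 - ln 3 ^ 2
      + 3 / 2 * Li2 (1 / 5) - / 2 * Li2 (1 / 25).
Proof.
  assert (Luc2 : Luc 2 = 3) by (unfold Luc; sqrt5_field).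
  assert (Fib1 : Fib 1 = 1) by (unfold Fib; rewrite !pow_1; field; rewrite alpha_sub_beta;
    apply Rgt_not_eq, sqrt_lt_R0; lra).
  pose proof (Li2_lucas 2 ltac:(now exists 1%nat)) as Lucas2.
  pose proof (Li2_fibonacci 1 ltac:(now exists 0%nat)) as Fibonacci1.
  rewrite Luc2 in Lucas2. rewrite Fib1, !pow_1, Rmult_1_r, ln_1 in Fibonacci1. simpl INR in *.
  repeat split.
  - exact Li2_alpha_half_add_Li2_beta_half.
  - exact Li2_alpha3_fifth_add_Li2_beta3_fifth.
  - exact Li2_lucas.
  - rewrite Lucas2. ring.
  - exact Li2_fibonacci.
  - rewrite Fibonacci1. ring.
  - exact Li2_alpha2_quarter_add_Li2_beta2_quarter.
  - exact Li2_alpha_third_add_Li2_beta_third.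
Qed.
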